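(* Let $X$ be a finite set with $|X|\ge 2$, $f:2^X\to\mathbb{R}_{\ge0}$ a normalized monotone submodular function possessing supermodularity of conditioning with $f(x)>0$ for all $x\in X$, and $n\le|X|$ a positive integer. Let $x_1,\dots,x_n$ be produced by the pessimistic algorithm: $S_0=\emptyset$ and for $i=1,\dots,n$, $x_i\in\arg\max_{x\in X\setminus S_{i-1}}\underline f(x\mid S_{i-1})$, $S_i=S_{i-1}\cup\{x_i\}$. Then for $i\in\{1,2\}$ (with $i\le n$), $f(x_i\mid S_{i-1})=\max_{x\in X\setminus S_{i-1}}f(x\mid S_{i-1})$, and for every $3\le i\le n$, \[ f(x_i\mid S_{i-1})\ \ge\ \big(1-\min\{(i-1)\tau_2,1\}\big)\max_{x\in X\setminus S_{i-1}} f(x\mid S_{i-1}). \] That is, the factors $\alpha_i=1$ for $i\le2$ and $\alpha_i=1/(1-\min\{(i-1)\tau_2,1\})$ for $i>2$ (with $\alpha_i=\infty$ when $(i-1)\tau_2\ge1$) satisfy $\alpha_i f(x_i\mid S_{i-1})\ge\max_{x\in X\setminus S_{i-1}}f(x\mid S_{i-1})$.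
   Context: $f(x\mid A):=f(A\cup\{x\})-f(A)$, $f(x):=f(\{x\})$, $f(x\mid y):=f(x\mid\{y\})$. Pairwise lower estimate: $\underline f(x\mid S):=f(x)-\sum_{y\in S}(f(x)-f(x\mid y))$. 2-cardinality curvature: $\tau_2:=1-\min_{x\in X,\ y\in X\setminus\{x\}} f(x\mid y)/f(x)$. Supermodularity of conditioning: for all $S\subseteq X$, $A\subseteq B\subseteq X$, $C\subseteq X\setminus B$, $f(S\mid A)-f(S\mid A\cup C)\ge f(S\mid B)-f(S\mid B\cup C)$, where $f(T\mid A):=f(A\cup T)-f(A)$. *)

From mathcomp Require Import all_boot all_order all_algebra.
Set Implicit Arguments. Unset Strict Implicit. Unset Printing Implicit Defensive.
Import Order.TTheory GRing.Theory Num.Theory.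
Local Open Scope ring_scope.

Section SetFun.
Variables (R : realFieldType) (X : finType) (f : {set X} -> R).

Definition marg (x : X) (A : {set X}) : R := f (x |: A) - f A.
Definition fsing (x : X) : R := f [set x].
Definition marg2 (x y : X) : R := marg x [set y].
Definition margS (T A : {set X}) : R := f (A :|: T) - f A.

Definition lowf (x : X) (S : {set X}) : R :=
  fsing x - \sum_(y in S) (fsing x - marg2 x y).

(* The iterated min uses 1 as neutral element; under the hypotheses of the
   theorem (submodularity, f(x) > 0, |X| >= 2) every ratio is <= 1 and the
   index set is nonempty, so this is exactly the minimum. *)
Definition tau2 : R :=
  1 - \big[Num.min/1]_(x : X) \big[Num.min/1]_(y : X | y != x)
        (marg2 x y / fsing x).

Definition normalized : Prop := f set0 = 0.
Definition nonneg : Prop := forall A, 0 <= f A.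
Definition monotone : Prop := forall A B : {set X}, A \subset B -> f A <= f B.
Definition submodular : Prop :=
  forall A B : {set X}, f (A :|: B) + f (A :&: B) <= f A + f B.
Definition supermod_conditioning : Prop :=
  forall S A B C : {set X}, A \subset B -> [disjoint C & B] ->
    margS S A - margS S (A :|: C) >= margS S B - margS S (B :|: C).
End SetFun.

(* S_i = {x_1, ..., x_i} for a sequence x indexed from 1 *)
Definition Sset (X : finType) (x : nat -> X) (i : nat) : {set X} :=
  [set y | [exists j : 'I_i, y == x j.+1]].

Definition pessimistic (R : realFieldType) (X : finType) (f : {set X} -> R)
    (x : nat -> X) (n : nat) : Prop :=
  forall i, (1 <= i <= n)%N ->
    x i \notin Sset x i.-1 /\
    forall y, y \notin Sset x i.-1 -> lowf f y (Sset x i.-1) <= lowf f (x i) (Sset x i.-1).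

From mathcomp Require Import all_boot all_order all_algebra lra.
Import Order.TTheory GRing.Theory Num.Theory.
Local Open Scope ring_scope.
Set Implicit Arguments. Unset Strict Implicit. Unset Printing Implicit Defensive.

(* The pessimistic algorithm maximizes the pairwise lower
   estimate  lowf x S = f(x) - sum_{y in S} (f(x) - f(x|y))  instead of the
   true marginal gain f(x|S).  Two facts about this estimate drive the proof:
   - it is a lower bound: lowf x S <= f(x|S) whenever x is not in S; this
     follows from supermodularity of conditioning, which says that conditioning
     on one more element y costs at most f(x) - f(x|y), by induction on |S|;
   - it is large: each loss f(x) - f(x|y) is at most tau2 f(x), so
     lowf x S >= (1 - |S| tau2) f(x) >= (1 - |S| tau2) f(x|S).
   For |S| <= 1 the estimate is exact, so the first two steps are truly
   greedy.  For step i the set S_{i-1} has at most i-1 elements, and chaining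
   f(x_i|S) >= lowf x_i S >= lowf y S >= (1 - (i-1) tau2) f(y|S) gives the
   bound; when (i-1) tau2 >= 1 the claim reduces to f(x_i|S) >= 0. *)

Lemma card_Sset (X : finType) (x : nat -> X) (k : nat) : (#|Sset x k| <= k)%N.
Proof.
have sub : Sset x k \subset [set x (val j).+1 | j in 'I_k].
  by apply/subsetP => y; rewrite inE => /existsP [j /eqP ->]; apply: imset_f.
by rewrite (leq_trans (subset_leq_card sub)) // (leq_trans (leq_imset_card _ _)) ?card_ord.
Qed.

Lemma Sset0 (X : finType) (x : nat -> X) : Sset x 0 = set0.
Proof. by apply/setP => y; rewrite !inE; apply/existsP => -[[]]. Qed.

Lemma Sset1 (X : finType) (x : nat -> X) : Sset x 1 = [set x 1%N].
Proof.
apply/setP => y; rewrite !inE; apply/existsP/idP => [[j]|/eqP ->].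
  by rewrite (ord1 j).
by exists ord0.
Qed.

Lemma bigmin_le1 (R : realFieldType) (I : finType) (P : pred I) (F : I -> R) :
  \big[Num.min/1]_(i | P i) F i <= 1.
Proof. by elim/big_rec: _ => // i y _ hy; rewrite ge_min hy orbT. Qed.

Lemma bigmin_le (R : realFieldType) (I : finType) (P : pred I) (F : I -> R) (i0 : I) :
  P i0 -> \big[Num.min/1]_(i | P i) F i <= F i0.
Proof. by move=> Pi; rewrite (bigD1 i0) //= ge_min lexx. Qed.

Section PairwiseEstimate.
Variables (R : realFieldType) (X : finType) (f : {set X} -> R).

Lemma lowf_set0 (x : X) : normalized f -> lowf f x set0 = marg f x set0.
Proof. by move=> f0; rewrite /lowf /marg /fsing big_set0 subr0 setU0 f0 subr0. Qed.

Lemma lowf_set1 (x y : X) : lowf f x [set y] = marg f x [set y].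
Proof. by rewrite /lowf big_set1 /marg2; lra. Qed.

Lemma lowf_setD1 (x z : X) (S : {set X}) : z \in S ->
  lowf f x S = lowf f x (S :\ z) - (fsing f x - marg2 f x z).
Proof. by move=> zS; rewrite /lowf (big_setD1 z zS) /=; lra. Qed.

(* Supermodularity of conditioning with A = {}, B = S, C = {z}: conditioning
   on z decreases the gain of x at least as much at {} as at any S. *)
Lemma marg_drop_le (x z : X) (S : {set X}) :
  normalized f -> supermod_conditioning f -> z \notin S ->
  marg f x S - marg f x (z |: S) <= fsing f x - marg2 f x z.
Proof.
move=> f0 sc zS.
have := sc [set x] set0 S [set z] (sub0set _); rewrite disjoints1 => /(_ zS).
rewrite /margS /marg /marg2 /marg /fsing !set0U f0 !(setUC _ [set x]).
by rewrite (setUC S [set z]) (setUC [set x] [set z]); lra.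
Qed.

Lemma lowf_le_marg (x : X) (S : {set X}) :
  normalized f -> supermod_conditioning f -> x \notin S ->
  lowf f x S <= marg f x S.
Proof.
move=> f0 sc; move Hk: #|S| => k; elim: k S Hk => [|k IH] S Hk xS.
  by move/eqP: Hk; rewrite cards_eq0 => /eqP ->; rewrite lowf_set0.
have /set0Pn [z zS] : S != set0 by rewrite -card_gt0 Hk.
have xSz : x \notin S :\ z by rewrite in_setD1 negb_and xS orbT.
have cardSz : #|S :\ z| = k by move: Hk; rewrite (cardsD1 z S) zS add1n => -[].
have IHz := IH _ cardSz xSz.
have drop := marg_drop_le x f0 sc (negbT (setD11 z S)).
rewrite setD1K // in drop.
by rewrite (lowf_setD1 x zS); lra.
Qed.

Hypotheses (f_nonneg : nonneg f) (f_mono : monotone f) (f_sub : submodular f).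
Hypothesis f_pos : forall y : X, 0 < fsing f y.

Lemma marg_ge0 (x : X) (S : {set X}) : 0 <= marg f x S.
Proof. by rewrite subr_ge0; apply: f_mono; apply: subsetUr. Qed.

Lemma marg_le_fsing (x : X) (S : {set X}) : marg f x S <= fsing f x.
Proof.
have := f_sub [set x] S; have := f_nonneg ([set x] :&: S).
by rewrite /marg /fsing; lra.
Qed.

Lemma tau2_ge0 : 0 <= tau2 f.
Proof. by rewrite /tau2 subr_ge0 bigmin_le1. Qed.

Lemma pair_loss_le_tau2 (x y : X) : y != x ->
  fsing f x - marg2 f x y <= tau2 f * fsing f x.
Proof.
move=> yx.
set M := \big[Num.min/1]_(x0 : X) \big[Num.min/1]_(y0 : X | y0 != x0)
  (marg2 f x0 y0 / fsing f x0).
have M_le : M <= marg2 f x y / fsing f x.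
  apply: le_trans (bigmin_le _ (erefl true : xpredT x)) _.
  exact: (bigmin_le (fun y0 => marg2 f x y0 / fsing f x) yx).
have M_le' : M * fsing f x <= marg2 f x y.
  by rewrite -(divfK (lt0r_neq0 (f_pos x)) (marg2 f x y)) ler_wpM2r // ltW.
by rewrite /tau2 -/M; lra.
Qed.

(* Summing the pairwise losses: the estimate is at least (1 - k tau2) f(x)
   for every k >= |S|. *)
Lemma lowf_ge_curvature (x : X) (S : {set X}) (k : nat) :
  x \notin S -> (#|S| <= k)%N -> (1 - k%:R * tau2 f) * fsing f x <= lowf f x S.
Proof.
move=> xS Sk.
have losses : \sum_(z in S) (fsing f x - marg2 f x z) <= #|S|%:R * (tau2 f * fsing f x).
  rewrite mulr_natl -sumr_const; apply: ler_sum => z zS.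
  by apply: pair_loss_le_tau2; apply: contraNneq xS => <-.
have card_le : #|S|%:R * (tau2 f * fsing f x) <= k%:R * (tau2 f * fsing f x).
  by rewrite ler_wpM2r ?ler_nat // mulr_ge0 ?tau2_ge0 ?ltW.
by rewrite /lowf mulrBl mul1r -mulrA; lra.
Qed.

End PairwiseEstimate.

Theorem theorem5 (R : realFieldType) (X : finType) (f : {set X} -> R)
    (n : nat) (x : nat -> X) :
  (2 <= #|X|)%N ->
  nonneg f -> normalized f -> monotone f -> submodular f ->
  supermod_conditioning f ->
  (forall y : X, 0 < fsing f y) ->
  (0 < n)%N -> (n <= #|X|)%N ->
  pessimistic f x n ->
  (forall i, (1 <= i <= minn 2 n)%N ->
     forall y, y \notin Sset x i.-1 ->
       marg f y (Sset x i.-1) <= marg f (x i) (Sset x i.-1)) /\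
  (forall i, (3 <= i <= n)%N ->
     forall y, y \notin Sset x i.-1 ->
       (1 - Num.min (i.-1%:R * tau2 f) 1) * marg f y (Sset x i.-1)
         <= marg f (x i) (Sset x i.-1)).
Proof.
move=> _ nn f0 mono sub sc fpos _ _ pess; split.
  move=> i /andP [i1]; rewrite leq_min => /andP [i2 iN] y yS.
  have [_ greedy] := pess i (andb_true_intro (conj i1 iN)).
  have := greedy y yS.
  by case: i i1 i2 {iN yS greedy} => [|[|[|]]] //= _ _;
     rewrite ?Sset0 ?Sset1 ?lowf_set0 ?lowf_set1.
move=> i /andP [i3 iN] y yS.
have [xiS greedy] := pess i (andb_true_intro (conj (ltnW (ltnW i3)) iN)).
set S := Sset x i.-1 in yS xiS greedy *.
have [small|large] := leP (i.-1%:R * tau2 f) 1; last first.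
  by rewrite subrr mul0r (marg_ge0 mono).
apply: le_trans (lowf_le_marg f0 sc xiS); apply: le_trans (greedy y yS).
apply: le_trans (lowf_ge_curvature fpos yS (card_Sset x i.-1)).
by rewrite ler_wpM2l ?subr_ge0 ?(marg_le_fsing nn sub).
Qed.
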